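(* For all integers $n\geq 0$, $i\geq 1$ and $\alpha\geq 0$, $\bar a_{2i}\big(2^\alpha(4n+3)\big)\equiv 0 \pmod 4$.
   Context: For an integer $k\geq 1$ let $f_k:=\prod_{n\geq 1}(1-q^{kn})$. For an integer $c\geq1$, the generalized overcubic partition function $\bar a_c(n)$ is defined by the generating function $\sum_{n\geq 0}\bar a_c(n)q^n=\dfrac{f_4^{c-1}}{f_1^2f_2^{2c-3}}$. *)

(* Formal power series in q are represented through
   truncations: the coefficient of q^N of a product of series with
   nonnegative exponents only depends on terms of degree <= N. *)
From mathcomp Require Import all_boot all_order all_algebra.
Set Implicit Arguments. Unset Strict Implicit. Unset Printing Implicit Defensive.
Import Order.TTheory GRing.Theory Num.Theory.
Local Open Scope ring_scope.

(* truncation (degree <= N) of 1/(1 - q^m) = sum_j q^(m j), for m >= 1 *)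
Definition geom_trunc (m N : nat) : {poly int} :=
  \sum_(j < N.+1) 'X^(m * j).

(* truncation-compatible representative of (1 - q^m)^e, e an integer *)
Definition factor_pow (m : nat) (e : int) (N : nat) : {poly int} :=
  match e with
  | Posz k => (1 - 'X^m) ^+ k
  | Negz k => (geom_trunc m N) ^+ k.+1
  end.

(* representative, correct up to degree N, of f_k^e = prod_{n>=1} (1-q^{kn})^e
   (factors with n > N are congruent to 1 mod q^(N+1) since k >= 1) *)
Definition f_pow_trunc (k : nat) (e : int) (N : nat) : {poly int} :=
  \prod_(1 <= n < N.+1) factor_pow (k * n) e N.

(* generalized overcubic partition function:
   sum_n abar c n q^n = f_4^(c-1) / (f_1^2 f_2^(2c-3)) *)
Definition abar (c n : nat) : int :=
  (f_pow_trunc 4 (c%:Z - 1) n * f_pow_trunc 1 (-2) n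
     * f_pow_trunc 2 (- (2 * c%:Z - 3)) n)`_n.

(* Modulo 4, f_4^(2i-1) / (f_1^2 f_2^(4i-3)) is congruent to f_4 / (f_1^2 f_2),
   because (1 - q^4)^2 = (1 - q^2)^4 mod 4.  Factorwise,
   (1 + q^2m) / (1 - q^m)^2 = 1 + 2 q^m / (1 - q^m)^2 = 1 + 2 q^m / (1 - q^2m) mod 4,
   and a product of terms 1 + 2 a_m is 1 + 2 sum a_m mod 4.  Hence abar_2i(N) is
   twice the number of odd divisors of N, mod 4.  For N = 2^alpha M with
   M = 3 mod 4, the involution d |-> M/d of the divisors of M exchanges those
   that are 1 and 3 mod 4, so M has an even number of divisors.
   Series are handled through their truncations, i.e. in Z[q] modulo the ideal
   (4, q^(N+1)), where geom_trunc m N stands for 1 / (1 - q^m). *)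

From mathcomp Require Import all_boot all_order all_algebra.
From mathcomp Require Import ring zify.

Set Implicit Arguments.
Unset Strict Implicit.
Unset Printing Implicit Defensive.

Import GRing.Theory.

Lemma even_size_perm_swap (T : eqType) (s : seq T) (f : T -> T) (P : pred T) :
  perm_eq s (map f s) -> {in s, forall x, P (f x) = ~~ P x} -> ~~ odd (size s).
Proof.
move=> sf Pf.
have cP : count P s = count (predC P) s.
  by rewrite (permP sf) count_map; apply: eq_in_count => x /Pf.
by rewrite -(count_predC P) -cP addnn odd_double.
Qed.

Lemma divn_divn {M d} : 0 < M -> d %| M -> M %/ (M %/ d) = d.
Proof. by move=> M0 dM; rewrite divnA // mulKn. Qed.

Lemma perm_divisors_codivisor M : 0 < M -> perm_eq (divisors M) (map (divn M) (divisors M)).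
Proof.
move=> M0; have codvd d : d %| M -> M %/ d %| M.
  by move=> dM; apply/dvdnP; exists d; rewrite mulnC divnK.
apply: uniq_perm; rewrite ?divisors_uniq //.
  rewrite map_inj_in_uniq ?divisors_uniq // => x y.
  rewrite -!dvdn_divisors // => xM yM e.
  by rewrite -(divn_divn M0 xM) e divn_divn.
move=> d; rewrite -dvdn_divisors //; apply/idP/mapP => [dM | [e]].
  by exists (M %/ d); rewrite ?divn_divn // -dvdn_divisors // codvd.
by rewrite -dvdn_divisors // => eM ->; apply: codvd.
Qed.

Lemma codivisor_mod4 M d : M %% 4 = 3 -> d %| M -> (M %/ d %% 4 == 3) = (d %% 4 != 3).
Proof.
move=> M3 dM; have M_odd : odd M by rewrite -(odd_mod M (d := 4)) // M3.
have /dvdnP [e eM] := dM; rewrite eM mulnK; last first.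
  by rewrite lt0n; apply: contraTneq M_odd => d0; rewrite eM d0 muln0.
have od : odd (d %% 4) by rewrite odd_mod // (dvdn_odd dM M_odd).
have oe : odd (e %% 4) by rewrite odd_mod // (dvdn_odd (dvdn_mulr d (dvdnn e)) _) // -eM.
have : (e %% 4) * (d %% 4) %% 4 = 3 by rewrite modnMm -eM.
have := ltn_pmod d (isT : 0 < 4); have := ltn_pmod e (isT : 0 < 4).
by move: od oe; case: (d %% 4) => [|[|[|[|]]]] //; case: (e %% 4) => [|[|[|[|]]]].
Qed.

Lemma divisors_even_size M : M %% 4 = 3 -> ~~ odd (size (divisors M)).
Proof.
move=> M3; have M0 : 0 < M by case: M M3.
apply: (even_size_perm_swap (perm_divisors_codivisor M0) (P := fun d => d %% 4 == 3)).
by move=> d; rewrite -dvdn_divisors // => /(codivisor_mod4 M3).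
Qed.

Lemma count_odd_dvdn a M : odd M ->
  count (fun j => 2 * j + 1 %| 2 ^ a * M) (iota 0 (2 ^ a * M).+1) = size (divisors M).
Proof.
move=> M_odd; have M0 : 0 < M by case: M M_odd.
have oddS j : odd (2 * j + 1) by rewrite oddD oddM.
have dvd_odd_part j : (2 * j + 1 %| 2 ^ a * M) = (2 * j + 1 %| M).
  by rewrite Gauss_dvdr // coprimeXr // coprimen2 oddS.
rewrite -size_filter -(size_map (fun j => 2 * j + 1)); apply: perm_size.
apply: uniq_perm; rewrite ?divisors_uniq //.
  by rewrite map_inj_uniq ?filter_uniq ?iota_uniq // => x y; lia.
move=> d; rewrite -dvdn_divisors //; apply/mapP/idP => [[j] | dM].
  by rewrite mem_filter dvd_odd_part => /andP [jM _] ->.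
have oddd := dvdn_odd dM M_odd; have dle := dvdn_leq M0 dM.
have dE : d = 2 * d./2 + 1 by have := odd_double_half d; rewrite oddd -muln2; lia.
exists d./2; last exact: dE.
rewrite mem_filter dvd_odd_part -dE dM mem_iota /=.
have : M <= 2 ^ a * M by rewrite leq_pmull // expn_gt0.
lia.
Qed.

Lemma sum_nat_of_bool (I : Type) (r : seq I) (P : pred I) :
  \sum_(i <- r) (P i : nat) = count P r.
Proof. by rewrite -sumn_count sumnE big_map. Qed.

Lemma sum_mul_eq_dvdn N d : 0 < N -> 0 < d ->
  \sum_(1 <= m < N.+1) (m * d == N : nat) = (d %| N).
Proof.
move=> N0 d0; rewrite sum_nat_of_bool; have [dN | ndN] := boolP (d %| N).
  rewrite (eq_count (a2 := pred1 (N %/ d))); last first.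
    by move=> m /=; apply/eqP/eqP => [<- | ->]; rewrite ?mulnK ?divnK.
  rewrite count_uniq_mem ?iota_uniq // mem_index_iota ltnS leq_div andbT.
  by rewrite divn_gt0 // dvdn_leq.
rewrite (eq_count (a2 := pred0)) ?count_pred0 // => m /=.
by apply: contraNF ndN => /eqP <-; apply: dvdn_mull.
Qed.

Local Open Scope ring_scope.

Section EqmodIdeal.
Variables (R : comRingType) (a b : R).

Definition eqmod (x y : R) := exists u v, x - y = a * u + b * v.

Lemma eqmod_refl x : eqmod x x.
Proof. by exists 0, 0; rewrite subrr !mulr0 addr0. Qed.

Lemma eqmod_sym x y : eqmod x y -> eqmod y x.
Proof. by case=> u [v e]; exists (- u), (- v); rewrite -opprB e; ring. Qed.

Lemma eqmod_trans y x z : eqmod x y -> eqmod y z -> eqmod x z.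
Proof.
case=> u [v e] [u' [v' e']]; exists (u + u'), (v + v').
by rewrite -(subrKA y) e e'; ring.
Qed.

Lemma eqmod_intro x y u v : x = y + a * u + b * v -> eqmod x y.
Proof. by move=> ->; exists u, v; ring. Qed.

Lemma eqmodD x y x' y' : eqmod x x' -> eqmod y y' -> eqmod (x + y) (x' + y').
Proof.
case=> u [v e] [u' [v' e']]; exists (u + u'), (v + v').
by rewrite opprD addrACA e e'; ring.
Qed.

Lemma eqmodM x y x' y' : eqmod x x' -> eqmod y y' -> eqmod (x * y) (x' * y').
Proof.
case=> u [v e] [u' [v' e']]; exists (u * y + x' * u'), (v * y + x' * v').
have -> : x * y - x' * y' = (x - x') * y + x' * (y - y') by ring.
by rewrite e e'; ring.
Qed.

Lemma eqmodX x y n : eqmod x y -> eqmod (x ^+ n) (y ^+ n).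
Proof.
move=> e; elim: n => [|n IHn]; first exact: eqmod_refl.
by rewrite !exprS; apply: eqmodM.
Qed.

Lemma eqmodX1 x n : eqmod x 1 -> eqmod (x ^+ n) 1.
Proof. by move/(eqmodX n); rewrite expr1n. Qed.

Lemma eqmodMr1 x y : eqmod y 1 -> eqmod (x * y) x.
Proof. by move/(eqmodM (eqmod_refl x)); rewrite mulr1. Qed.

Lemma eqmod_prod (I : eqType) (r : seq I) (P : pred I) (F G : I -> R) :
  (forall i, i \in r -> P i -> eqmod (F i) (G i)) ->
  eqmod (\prod_(i <- r | P i) F i) (\prod_(i <- r | P i) G i).
Proof.
move=> FG; rewrite !(big_seq_cond P).
apply: big_ind2 => [|x x' y y'|i /andP [ri Pi]]; [exact: eqmod_refl | exact: eqmodM |].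
exact: FG.
Qed.

End EqmodIdeal.

Section EqmodFour.
Variables (R : comRingType) (b : R).
Local Notation eqm := (eqmod 4 b).

Lemma eqmod4_prod_1add2 (I : Type) (r : seq I) (P : pred I) (F : I -> R) :
  eqm (\prod_(i <- r | P i) (1 + 2 * F i)) (1 + 2 * \sum_(i <- r | P i) F i).
Proof.
apply: (big_ind2 (fun p s => eqm p (1 + 2 * s))) => [|p s p' s' ep es|i _].
- by rewrite mulr0 addr0; apply: eqmod_refl.
- apply: eqmod_trans (eqmodM ep es) _.
  by apply: (eqmod_intro (u := s * s') (v := 0)); ring.
- exact: eqmod_refl.
Qed.

Lemma eqmod4_1subX4_pow x g k : eqm ((1 - x ^+ 2) * g) 1 ->
  eqm ((1 - x ^+ 4) ^+ (2 * k + 1) * g ^+ (4 * k + 1)) (1 + x ^+ 2).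
Proof.
move=> hg.
have sq : eqm ((1 - x ^+ 4) ^+ 2 * g ^+ 4) 1.
  (* (1 - x^4)^2 = (1 - x^2)^4 + 4 (x^2 - 2 x^4 + x^6) *)
  apply: eqmod_trans (eqmodX1 4 hg).
  by apply: (eqmod_intro (u := (x ^+ 2 - 2 * x ^+ 4 + x ^+ 6) * g ^+ 4) (v := 0)); ring.
have -> : (1 - x ^+ 4) ^+ (2 * k + 1) * g ^+ (4 * k + 1)
        = ((1 - x ^+ 4) ^+ 2 * g ^+ 4) ^+ k * ((1 + x ^+ 2) * ((1 - x ^+ 2) * g)).
  by rewrite exprMn (exprD _ (2 * k)) (exprD _ (4 * k)) !exprM; ring.
by rewrite -[X in eqm _ X]mul1r; apply: eqmodM; [apply: eqmodX1 | apply: eqmodMr1].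
Qed.

Lemma eqmod4_1addX2_mul_sq x g1 g2 : eqm ((1 - x) * g1) 1 -> eqm ((1 - x ^+ 2) * g2) 1 ->
  eqm ((1 + x ^+ 2) * g1 ^+ 2) (1 + 2 * (x * g2)).
Proof.
move=> h1 h2.
have e : eqm (2 * x * g1 ^+ 2) (2 * (x * g2)).
  (* (1 - x^2) - (1 - x)^2 = 2 x (1 - x) *)
  apply: eqmod_trans (eqmod_sym (eqmodMr1 (2 * x * g1 ^+ 2) h2)) _.
  apply: eqmod_trans (eqmodMr1 (2 * (x * g2)) (eqmodX1 2 h1)).
  by apply: (eqmod_intro (u := x ^+ 2 * (1 - x) * g1 ^+ 2 * g2) (v := 0)); ring.
have -> : (1 + x ^+ 2) * g1 ^+ 2 = ((1 - x) * g1) ^+ 2 + 2 * x * g1 ^+ 2 by ring.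
by apply: eqmodD e; apply: eqmodX1.
Qed.

Lemma eqmod4_factor x g1 g2 k : eqm ((1 - x) * g1) 1 -> eqm ((1 - x ^+ 2) * g2) 1 ->
  eqm ((1 - x ^+ 4) ^+ (2 * k + 1) * g1 ^+ 2 * g2 ^+ (4 * k + 1)) (1 + 2 * (x * g2)).
Proof.
move=> h1 h2; apply: eqmod_trans (eqmod4_1addX2_mul_sq h1 h2).
by rewrite mulrAC; apply: eqmodM (eqmod4_1subX4_pow k h2) (eqmod_refl _ _ _).
Qed.
End EqmodFour.

Lemma geom_truncE m N : (1 - 'X^m) * geom_trunc m N = 1 - 'X^(m * N.+1).
Proof.
rewrite /geom_trunc; elim: N => [|N IHN].
  by rewrite big_ord1 muln0 muln1 expr0 mulr1.
rewrite big_ord_recr /= mulrDr IHN mulrBl mul1r -exprD -mulnS.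
by rewrite addrA subrK.
Qed.

Lemma eqmod_geom_trunc m N : (0 < m)%N ->
  eqmod 4 'X^(N.+1) ((1 - 'X^m) * geom_trunc m N) 1.
Proof.
move=> m0; rewrite geom_truncE.
have -> : (m * N.+1 = N.+1 + (m * N.+1 - N.+1))%N by rewrite subnKC // leq_pmull.
by apply: (eqmod_intro (u := 0) (v := - 'X^(m * N.+1 - N.+1))); rewrite exprD; ring.
Qed.

Lemma eqmod4_coef N (p q : {poly int}) :
  eqmod 4 'X^(N.+1) p q -> (4 %| p`_N - q`_N)%Z.
Proof.
case=> u [v e]; rewrite -coefB e coefD coefXnM ltnSn addr0.
by rewrite mulr_natl coefMn; apply/dvdzP; exists u`_N; rewrite mulr_natr.
Qed.

Lemma abar_even_index k N :
  abar (2 * k.+1) N = (\prod_(1 <= m < N.+1) ((1 - 'X^(4 * m)) ^+ (2 * k + 1)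
      * geom_trunc m N ^+ 2 * geom_trunc (2 * m) N ^+ (4 * k + 1)))`_N.
Proof.
have e4 : (2 * k.+1)%N%:Z - 1 = Posz (2 * k + 1) by lia.
have e1 : -2 = Negz 1 by [].
have e2 : - (2 * (2 * k.+1)%N%:Z - 3) = Negz (4 * k) by rewrite NegzE; lia.
rewrite /abar e4 e1 e2 /f_pow_trunc -!big_split /=.
by under eq_bigr => m _ do rewrite mul1n -[(4 * k).+1]addn1.
Qed.

Lemma coef_sum_X_geom_trunc N : (0 < N)%N ->
  (\sum_(1 <= m < N.+1) 'X^m * geom_trunc (2 * m) N)`_N
    = (count (fun j => 2 * j + 1 %| N)%N (iota 0 N.+1))%:R.
Proof.
move=> N0; rewrite coef_sum.
under eq_bigr => m _ do rewrite /geom_trunc mulr_sumr coef_sum.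
under eq_bigr => m _ do under eq_bigr => j _ do rewrite -exprD coefXn.
have -> : iota 0 N.+1 = index_iota 0 N.+1 by rewrite /index_iota subn0.
rewrite -sum_nat_of_bool natr_sum big_mkord exchange_big; apply: eq_bigr => j _.
rewrite -sum_mul_eq_dvdn ?addn1 // natr_sum; apply: eq_bigr => m _.
by rewrite eq_sym mulnS mulnCA mulnA.
Qed.

Lemma dvd4_coef_odd_divisor_series a M N : (M %% 4 = 3)%N -> N = (2 ^ a * M)%N ->
  (4 %| (1 + 2 * \sum_(1 <= m < N.+1) 'X^m * geom_trunc (2 * m) N)`_N)%Z.
Proof.
move=> M3 ->; have M_odd : odd M by rewrite -(odd_mod M (d := 4)) // M3.
have N0 : (0 < 2 ^ a * M)%N by rewrite muln_gt0 expn_gt0 (odd_gt0 M_odd).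
rewrite coefD coef1 gtn_eqF // add0r mulr_natl coefMn coef_sum_X_geom_trunc //.
rewrite count_odd_dvdn // -[size _]odd_double_half (negbTE (divisors_even_size M3)).
by apply/dvdzP; exists (size (divisors M))./2%:R; rewrite add0n -mulr_natr -natrM; lia.
Qed.

Theorem theorem1p6 (n i alpha : nat) :
  (1 <= i)%N -> (4 %| abar (2 * i) (2 ^ alpha * (4 * n + 3)))%Z.
Proof.
case: i => [//|k] _; set N := (2 ^ alpha * (4 * n + 3))%N.
set S := \sum_(1 <= m < N.+1) 'X^m * geom_trunc (2 * m) N.
have series_eqmod : eqmod 4 'X^(N.+1) (\prod_(1 <= m < N.+1) ((1 - 'X^(4 * m)) ^+ (2 * k + 1)
      * geom_trunc m N ^+ 2 * geom_trunc (2 * m) N ^+ (4 * k + 1))) (1 + 2 * S).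
  apply: eqmod_trans (eqmod4_prod_1add2 _ _ _ _).
  apply: eqmod_prod => m; rewrite mem_index_iota => /andP [m0 _] _.
  rewrite mulnC exprM; apply: eqmod4_factor; first exact: eqmod_geom_trunc.
  by rewrite -exprM mulnC; apply: eqmod_geom_trunc; rewrite muln_gt0.
rewrite abar_even_index -(subrK (1 + 2 * S)`_N (_`_N)) rpredD ?eqmod4_coef //.
by apply: (dvd4_coef_odd_divisor_series (a := alpha) (M := 4 * n + 3)); rewrite // -modnDm modnMr.
Qed.
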